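(* Let $G=(V,E,w)$ be an instance of TSP, let $V_b$ be the set of bad vertices and $V_g=V\setminus V_b$ the set of good vertices, and assume $\min\{|V_g|,|V_b|\}\ge 3$. Let $o\in V_g$ be any good vertex, let $T_b^*$ be a minimum-weight TSP tour (Hamiltonian cycle) of the induced subgraph $G[V_b\cup\{o\}]$, and let $T_g^*$ be a minimum-weight TSP tour of $G[V_g]$. Then $\mathrm{OPT}\ge w(T_b^* )$ and $\mathrm{OPT}\ge w(T_g^* )$.
   Context: An instance of TSP is a complete graph $G=(V,E,w)$ with a symmetric non-negative edge-weight function $w$ (with $w(a,a)=0$). A TSP tour is a Hamiltonian cycle; its weight $w(\cdot)$ is the sum of its edge weights, and $\mathrm{OPT}$ is the minimum weight of a TSP tour of $G$. A triangle on three distinct vertices $a,b,c$ is violating if the three weights among them violate the triangle inequality (some side exceeds the sum of the other two). A vertex is bad if it belongs to some violating triangle, and good otherwise. *)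

From mathcomp Require Import all_boot all_order all_algebra.
Set Implicit Arguments. Unset Strict Implicit. Unset Printing Implicit Defensive.
Import Order.TTheory GRing.Theory Num.Theory.
Local Open Scope ring_scope.

Section TSP.
Variables (R : realDomainType) (V : finType) (w : V -> V -> R).

Definition tsp_instance : Prop :=
  [/\ forall a b, w a b = w b a, forall a b, 0 <= w a b & forall a, w a a = 0].

Definition violating (a b c : V) : bool :=
  [|| w a b > w a c + w c b, w a c > w a b + w b c | w b c > w b a + w a c].

Definition bad (a : V) : bool :=
  [exists b : V, exists c : V, [&& a != b, a != c, b != c & violating a b c]].

Definition bad_set : {set V} := [set v | bad v].
Definition good_set : {set V} := ~: bad_set.

(* A tour (Hamiltonian cycle) is represented by the cyclic sequence of its
   vertices; its weight is the sum of w over consecutive (cyclically) pairs. *)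
Definition tour_weight (s : seq V) : R := \sum_(x <- s) w x (next s x).

Definition is_tour (S : {set V}) (s : seq V) : Prop :=
  [/\ uniq s, (3 <= size s)%N & forall x, (x \in s) = (x \in S)].

Definition is_opt_tour (S : {set V}) (s : seq V) : Prop :=
  is_tour S s /\ forall t, is_tour S t -> tour_weight s <= tour_weight t.

End TSP.

(* Every triangle through a good vertex satisfies the triangle inequality.
   Restricting a tour of G to a vertex set S by skipping the vertices outside S
   replaces each detour a, y_1, ..., y_k, b (a, b in S, the y_i outside S) by the
   edge ab, and unrolling the triangle inequality w a b <= w a y_k + w y_k b
   along the detour shows this never increases the weight, provided every
   triangle (a, y, b) with a in S and y outside S is non-violating. That holds
   for S = V_b + o, whose complement is good, and for S = V_g, which is good.
   So both restrictions of an optimal tour are tours of the respective subgraphs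
   of weight at most OPT. *)

From mathcomp Require Import all_boot all_order all_algebra.
Set Implicit Arguments. Unset Strict Implicit. Unset Printing Implicit Defensive.
Import Order.TTheory GRing.Theory Num.Theory.
Local Open Scope ring_scope.

Lemma filter_rot (T : Type) (a : pred T) n (s : seq T) :
  filter a (rot n s) = rot (count a (take n s)) (filter a s).
Proof.
by rewrite -size_filter -{3}(cat_take_drop n s) filter_cat rot_size_cat filter_cat.
Qed.

Section PathWeight.
Variables (R : realDomainType) (V : finType) (w : V -> V -> R).

Fixpoint path_weight (x : V) (s : seq V) : R :=
  if s is y :: s' then w x y + path_weight y s' else 0.

Lemma path_weight_cat x s t :
  path_weight x (s ++ t) = path_weight x s + path_weight (last x s) t.
Proof. by elim: s x => [|y s IHs] x /=; rewrite ?add0r // IHs addrA. Qed.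

Lemma path_weight_rcons x s y :
  path_weight x (rcons s y) = path_weight x s + w (last x s) y.
Proof. by rewrite -cats1 path_weight_cat /= addr0. Qed.

Lemma big_next_at y x s : uniq (x :: s) ->
  \sum_(z <- x :: s) w z (next_at z y x s) = path_weight x (rcons s y).
Proof.
elim: s x => [|z s IHs] x /=; first by rewrite big_seq1 /= eqxx addr0.
case/andP=> /negbTE xNzs uzs; rewrite big_cons /= eqxx -IHs //.
congr (_ + _); apply: eq_big_seq => u zs_u /=.
by case: eqP zs_u => [->|//]; rewrite xNzs.
Qed.

Lemma tour_weight_cons x s :
  uniq (x :: s) -> tour_weight w (x :: s) = path_weight x (rcons s x).
Proof. exact: big_next_at. Qed.

Lemma tour_weight_rot n s : uniq s -> tour_weight w (rot n s) = tour_weight w s.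
Proof.
move=> us; rewrite /tour_weight (perm_big s) ?perm_rot //.
by apply: eq_bigr => x _; rewrite next_rot.
Qed.

End PathWeight.

Section Shortcut.
Variables (R : realDomainType) (V : finType) (w : V -> V -> R) (S : {set V}).
Hypothesis detour_ge : forall a y b, a \in S -> y \notin S -> w a b <= w a y + w y b.

Lemma shortcut_le a ys b :
  a \in S -> all [predC S] ys -> w a b <= path_weight w a (rcons ys b).
Proof.
move=> Sa; elim/last_ind: ys b => [|ys y IHys] b; first by rewrite /= addr0.
rewrite all_rcons => /andP[/= Sy_N Sys_N].
rewrite path_weight_rcons last_rcons (le_trans (detour_ge b Sa Sy_N)) //.
by rewrite lerD2r IHys.
Qed.

Lemma path_weight_filter x ys s :
  x \in S -> all [predC S] ys -> last x (ys ++ s) \in S ->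
  path_weight w x [seq z <- s | z \in S] <= path_weight w x (ys ++ s).
Proof.
elim: s x ys => [|y s IHs] x ys Sx Sys_N.
  rewrite cats0; case/lastP: ys Sys_N => [//|ys y].
  by rewrite all_rcons last_rcons => /andP[/negbTE->].
rewrite last_cat /= -cat_rcons; case: ifP => [Sy | /negbT Sy_N] Sl.
  rewrite path_weight_cat last_rcons /= lerD ?shortcut_le //.
  exact: (IHs y [::]).
apply: (IHs x (rcons ys y)) => //; first by rewrite all_rcons /= Sy_N.
by rewrite last_cat last_rcons.
Qed.

Lemma tour_weight_filter T :
  uniq T -> (exists2 o, o \in T & o \in S) ->
  tour_weight w [seq z <- T | z \in S] <= tour_weight w T.
Proof.
move=> uT [o To So]; set i := index o T.
rewrite -(tour_weight_rot w i uT).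
rewrite -(tour_weight_rot w (count [in S] (take i T)) (filter_uniq _ uT)).
rewrite -filter_rot.
have := rot_uniq i T; rewrite uT /i rot_index //; move: (_ ++ _) => t uot.
have := filter_uniq [in S] uot; rewrite /= So => uoSt.
rewrite !tour_weight_cons // -[rcons t o]cat0s.
have -> : rcons [seq x <- t | x \in S] o = [seq x <- rcons t o | x \in S].
  by rewrite filter_rcons So.
by apply: path_weight_filter; rewrite // last_rcons.
Qed.

Lemma tour_filter A T :
  is_tour A T -> S \subset A -> (3 <= #|S|)%N -> is_tour S [seq z <- T | z \in S].
Proof.
case=> uT _ memT sSA cardS; have uST := filter_uniq [in S] uT.
have memST z : (z \in [seq z <- T | z \in S]) = (z \in S).
  by rewrite mem_filter memT andb_idr // => /(subsetP sSA).
by split=> //; rewrite -(card_uniqP uST) (eq_card memST).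
Qed.

Lemma opt_tour_le_tour A T T' :
  is_opt_tour w S T' -> is_tour A T -> S \subset A ->
  (3 <= #|S|)%N -> tour_weight w T' <= tour_weight w T.
Proof.
move=> [_ optT'] tourT sSA cardS.
apply: le_trans (optT' _ (tour_filter tourT sSA cardS)) _.
case: tourT => uT _ memT; apply: tour_weight_filter => //.
have [o So] : exists o, o \in S by apply/set0Pn; rewrite -card_gt0 (leq_trans _ cardS).
by exists o; rewrite // memT (subsetP sSA).
Qed.

End Shortcut.

Section GoodTriangles.
Variables (R : realDomainType) (V : finType) (w : V -> V -> R).
Hypothesis tsp_w : tsp_instance w.

Lemma violating_bad x y z :
  x != y -> x != z -> y != z -> w x y + w y z < w x z ->
  [&& bad w x, bad w y & bad w z].
Proof.
case: tsp_w => w_sym _ _ xNy xNz yNz lt_xz.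
apply/and3P; split; apply/existsP.
- by exists z; apply/existsP; exists y; rewrite xNz xNy eq_sym yNz /violating lt_xz.
- exists x; apply/existsP; exists z.
  by rewrite eq_sym xNy yNz xNz /violating lt_xz !orbT.
- exists x; apply/existsP; exists y; rewrite eq_sym xNz eq_sym yNz xNy /violating.
  by rewrite (w_sym z x) (w_sym z y) (w_sym y x) addrC lt_xz.
Qed.

Lemma good_triangle x y z :
  [|| x \in good_set w, y \in good_set w | z \in good_set w] ->
  w x z <= w x y + w y z.
Proof.
case: tsp_w => _ w_ge0 w_diag.
have [->|xNy] := eqVneq x y; first by rewrite w_diag add0r.
have [->|yNz] := eqVneq y z; first by rewrite w_diag addr0.
have [->|xNz] := eqVneq x z; first by rewrite w_diag addr_ge0.
rewrite leNgt !inE; apply: contraL => /(violating_bad xNy xNz yNz).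
by case/and3P=> -> -> ->.
Qed.

End GoodTriangles.

Theorem lemma1 (R : realDomainType) (V : finType) (w : V -> V -> R)
  (o : V) (Tb Tg Topt : seq V) :
  tsp_instance w ->
  (3 <= minn #|good_set w| #|bad_set w|)%N ->
  o \in good_set w ->
  is_opt_tour w (o |: bad_set w) Tb ->
  is_opt_tour w (good_set w) Tg ->
  is_opt_tour w [set: V] Topt ->
  tour_weight w Tb <= tour_weight w Topt /\ tour_weight w Tg <= tour_weight w Topt.
Proof.
(* The shortcut argument does not need o to be good. *)
move=> tsp_w; rewrite leq_min => /andP[card_good card_bad] _ optTb optTg.
case=> tourTopt _; split.
- apply: (opt_tour_le_tour _ optTb tourTopt); rewrite ?subsetT //.
    move=> a y b _; rewrite in_setU1 negb_or => /andP[_ bad_y].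
    by apply: good_triangle; rewrite // [y \in _]inE bad_y orbT.
  by rewrite (leq_trans card_bad) // subset_leq_card // subsetUr.
- apply: (opt_tour_le_tour _ optTg tourTopt); rewrite ?subsetT //.
  by move=> a y b good_a _; apply: good_triangle; rewrite ?good_a.
Qed.
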